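(* Consider the dynamic load balancing game described in the context, where every player follows the best-response algorithm. Then, with $t'=\max_{j\in[m]}\lceil s_j^0/\mu_j\rceil$, for every time $t\ge t'$ the player $i$ who receives the job at time $t$ distributes it among all the servers, i.e., $a_{ij}^t>0$ for all $j\in[m]$ and all $t\ge t'$.
   Context: Dynamic load balancing game: there are $m$ servers with service rates $\mu_j>0$ and $n$ players with job lengths $\lambda_i>0$; let $\lambda_{\max}=\max_i\lambda_i$, and assume $\lambda_{\max}<\sum_{j=1}^m\mu_j$. Time is discrete, $t=0,1,2,\dots$; the state at time $t$ is $s^t=(s_1^t,\dots,s_m^t)$ with $s_j^t\ge0$ the load on server $j$, and $s^0$ is the given initial state. At each time $t$ exactly one player $i$ receives a new job of length $\lambda_i$ and immediately chooses an action $a_i^t$ in the simplex $\{a:\sum_j a_j=1,a_j\ge0\}$, incurring cost $$D_i(a^t,s^t)=\sum_{j=1}^m\lambda_i a_{ij}^t\left(\frac{\lambda_i a_{ij}^t}{2\mu_j}+\frac{s_j^t}{\mu_j}\right),$$ after which the state evolves as $s_j^{t+1}=\max\{0,\ s_j^t+\lambda_i a_{ij}^t-\mu_j\}$ for all $j$. Best-response algorithm: the player $i$ receiving the job at time $t$ observes $s^t$ and chooses $a_i^t$ as the (unique) minimizer of $D_i(a_i,s^t)$ over the simplex (equivalently, the greedy water-filling rule: with servers sorted by $\mu_j/s_j^t$ in decreasing order, put mass on the first $c-1$ servers so that $(\lambda_i a_{ij}^t+s_j^t)/\mu_j$ is equal on them, where $c$ is the smallest index with $\frac{s_c^t}{\mu_c}\ge\frac{\lambda_i+\sum_{k<c}s_k^t}{\sum_{k<c}\mu_k}$,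 or $c=m+1$ if none). *)

From mathcomp Require Import all_boot all_order all_algebra.
Set Implicit Arguments. Unset Strict Implicit. Unset Printing Implicit Defensive.
Import Order.TTheory GRing.Theory Num.Theory.
Local Open Scope ring_scope.

Section LB.
Variable R : archiRealFieldType.
Variable m : nat.

Definition in_simplex (a : 'I_m -> R) : Prop :=
  (forall j, 0 <= a j) /\ \sum_(j < m) a j = 1.

Definition cost (mu : 'I_m -> R) (lam : R) (a s : 'I_m -> R) : R :=
  \sum_(j < m) lam * a j * (lam * a j / (2 * mu j) + s j / mu j).

Definition best_response (mu : 'I_m -> R) (lam : R) (s a : 'I_m -> R) : Prop :=
  in_simplex a /\ (forall b, in_simplex b -> cost mu lam a s <= cost mu lam b s).

Definition next_state (mu : 'I_m -> R) (lam : R) (s a : 'I_m -> R) : 'I_m -> R :=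
  fun j => Num.max 0 (s j + lam * a j - mu j).

(* t' = max_j ceil(s_j^0 / mu_j)  (as an integer; all terms are >= 0) *)
Definition t_prime (mu s0 : 'I_m -> R) : int :=
  \big[Num.max/0%R]_(j < m) Num.ceil (s0 j / mu j).
End LB.

Definition lambda_max (R : archiRealFieldType) (n : nat) (lam : 'I_n -> R) : R :=
  \big[Num.max/0%R]_(i < n) lam i.

(** A best response equalises the finish times [(lam a_j + s_j) / mu_j] on
    the servers it uses and leaves idle only servers whose current delay
    [s_j / mu_j] already exceeds that common level (an exchange argument on the
    separable convex cost).  Under best responses the delay of a server can
    exceed that of another one only through its initial surplus, which drains
    at rate one per step, since an overloaded server gets no new work; hence
    from time [t'] on all delays coincide, and a server of minimal delay always
    receives a positive share. *)

From mathcomp Require Import all_boot all_order all_algebra.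
From mathcomp Require Import ring lra.
Import Order.TTheory GRing.Theory Num.Theory.
Local Open Scope ring_scope.

Set Implicit Arguments.
Unset Strict Implicit.
Unset Printing Implicit Defensive.

Lemma bigD2 (I : finType) (V : nmodType) (F : I -> V) (j k : I) : j != k ->
  \sum_i F i = F j + F k + \sum_(i | (i != j) && (i != k)) F i.
Proof.
move=> jk; rewrite (bigD1 j) //= (bigD1 k) /= 1?eq_sym //.
by rewrite addrA.
Qed.

Section Transfer.
Variables (R : archiRealFieldType) (m : nat).

Definition transfer (a : 'I_m -> R) (j k : 'I_m) (e : R) : 'I_m -> R :=
  fun i => if i == j then a j - e else if i == k then a k + e else a i.

Lemma sum_transfer (F : 'I_m -> R -> R) a j k e : j != k ->
  \sum_i F i (transfer a j k e i) - \sum_i F i (a i) =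
  F j (a j - e) + F k (a k + e) - (F j (a j) + F k (a k)).
Proof.
move=> jk; rewrite (bigD2 _ jk) (bigD2 _ jk) /transfer eqxx eq_sym (negbTE jk) eqxx.
rewrite (eq_bigr (fun i => F i (a i))); first by ring.
by move=> i /andP[/negbTE -> /negbTE ->].
Qed.

Lemma in_simplex_transfer a j k e : j != k -> in_simplex a -> 0 <= e <= a j ->
  in_simplex (transfer a j k e).
Proof.
move=> jk [a_ge0 a_sum1] /andP[e_ge0 e_le]; split.
  move=> i; rewrite /transfer; case: ifP => _; first by rewrite subr_ge0.
  by case: ifP => _; [apply: addr_ge0 | apply: a_ge0].
apply/eqP; rewrite -subr_eq0 -[X in _ - X]a_sum1.
by rewrite (sum_transfer (fun _ x => x)) //=; apply/eqP; ring.
Qed.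

Lemma separable_argmin_transfer (F : 'I_m -> R -> R) a j k e :
  in_simplex a ->
  (forall b, in_simplex b -> \sum_i F i (a i) <= \sum_i F i (b i)) ->
  j != k -> 0 <= e <= a j ->
  F j (a j) + F k (a k) <= F j (a j - e) + F k (a k + e).
Proof.
move=> a_simplex a_min jk e_range.
have := a_min _ (in_simplex_transfer jk a_simplex e_range).
by rewrite -subr_ge0 sum_transfer // subr_ge0.
Qed.

End Transfer.

Section BestResponse.
Variables (R : archiRealFieldType) (m : nat) (mu : 'I_m -> R).
Hypothesis mu_gt0 : forall j, 0 < mu j.

Definition delay (s : 'I_m -> R) (j : 'I_m) : R := s j / mu j.

Definition finish_time (lam : R) (s a : 'I_m -> R) (j : 'I_m) : R :=
  (lam * a j + s j) / mu j.

Definition server_cost (lam : R) (s : 'I_m -> R) (j : 'I_m) (x : R) : R :=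
  lam * x * (lam * x / (2 * mu j) + s j / mu j).

Lemma server_cost_transfer lam s a j k e :
  server_cost lam s j (a j - e) + server_cost lam s k (a k + e)
  - (server_cost lam s j (a j) + server_cost lam s k (a k)) =
  lam * e * (finish_time lam s a k - finish_time lam s a j
             + lam * e * (1 / (2 * mu j) + 1 / (2 * mu k))).
Proof.
rewrite /server_cost /finish_time /=; field.
by rewrite !lt0r_neq0.
Qed.

Lemma best_response_finish_le lam s a j k : 0 < lam ->
  best_response mu lam s a -> 0 < a j ->
  finish_time lam s a j <= finish_time lam s a k.
Proof.
move=> lam_gt0 [a_simplex a_min] aj_gt0.
have [-> // | jk] := eqVneq j k.
apply/ler_addgt0Pr => eps eps_gt0.
set h := 1 / (2 * mu j) + 1 / (2 * mu k).
have h_gt0 : 0 < h by apply: addr_gt0; rewrite divr_gt0 // mulr_gt0.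
set e := Num.min (a j) (eps / (lam * h)).
have e_gt0 : 0 < e by rewrite lt_min aj_gt0 !divr_gt0 // mulr_gt0.
have e_le : lam * h * e <= eps.
  by rewrite -ler_pdivlMl ?mulr_gt0 // mulrC ge_min lexx orbT.
have gain : 0 <= server_cost lam s j (a j - e) + server_cost lam s k (a k + e)
                 - (server_cost lam s j (a j) + server_cost lam s k (a k)).
  rewrite subr_ge0; apply: (separable_argmin_transfer a_simplex a_min jk).
  by rewrite ltW // ge_min lexx.
move: gain; rewrite server_cost_transfer pmulr_rge0 ?mulr_gt0 // -/h; lra.
Qed.

Lemma best_response_eq0 lam s a j k : 0 < lam -> best_response mu lam s a ->
  finish_time lam s a k < finish_time lam s a j -> a j = 0.
Proof.
move=> lam_gt0 br fk_lt; have [[a_ge0 _] _] := br.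
apply/eqP; rewrite eq_le a_ge0 andbT leNgt; apply/negP => aj_gt0.
by have := best_response_finish_le k lam_gt0 br aj_gt0; rewrite leNgt fk_lt.
Qed.

Lemma delay_ge0 s j : 0 <= s j -> 0 <= delay s j.
Proof. by move=> sj_ge0; rewrite divr_ge0 // ltW. Qed.

Lemma delay_le_finish_time lam s a j : 0 <= lam -> 0 <= a j ->
  delay s j <= finish_time lam s a j.
Proof.
move=> lam_ge0 aj_ge0; rewrite /delay /finish_time mulrDl.
have : 0 <= lam * a j / mu j by rewrite divr_ge0 ?mulr_ge0 // ltW.
lra.
Qed.

Lemma delay_next_state lam s a j :
  delay (next_state mu lam s a) j = Num.max 0 (finish_time lam s a j - 1).
Proof.
rewrite /delay /next_state /finish_time maxr_pMl ?invr_ge0 ?ltW // mul0r.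
by congr (Num.max 0 _); field; rewrite lt0r_neq0.
Qed.

Lemma delay_next_state_le lam s a j k c : 0 < lam -> best_response mu lam s a ->
  delay s j <= Num.max (delay s k) c ->
  delay (next_state mu lam s a) j <= Num.max (delay (next_state mu lam s a) k) (c - 1).
Proof.
move=> lam_gt0 br delay_le; have [[a_ge0 _] _] := br.
rewrite !delay_next_state.
have [fj_le | fk_lt] := leP (finish_time lam s a j) (finish_time lam s a k).
  apply: le_trans (le_max2 (lexx 0) (lerB fj_le (lexx 1))) _.
  by rewrite le_max lexx.
have aj0 := best_response_eq0 lam_gt0 br fk_lt.
have dk_le := delay_le_finish_time s (ltW lam_gt0) (a_ge0 k).
have fj_eq : finish_time lam s a j = delay s j by rewrite /finish_time aj0 mulr0 add0r.
move: delay_le fk_lt; rewrite fj_eq le_max => /orP[dj_le | dj_le] fk_lt; first lra.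
by rewrite ge_max !le_max lexx (lerB dj_le (lexx 1)) !orbT.
Qed.

Lemma best_response_gt0_at_min_delay lam s a j : 0 < lam ->
  best_response mu lam s a -> (forall k, delay s j <= delay s k) -> 0 < a j.
Proof.
move=> lam_gt0 br j_min; have [[a_ge0 a_sum1] _] := br.
rewrite lt_neqAle a_ge0 andbT eq_sym; apply/eqP => aj0.
have [k ak_gt0 | a_le0] := pickP (fun k => 0 < a k); last first.
  move: a_sum1; rewrite big1 => [/eqP | i _]; first by rewrite eq_sym oner_eq0.
  by apply/eqP; rewrite eq_le a_ge0 andbT leNgt a_le0.
have := best_response_finish_le j lam_gt0 br ak_gt0.
rewrite /finish_time aj0 mulr0 add0r mulrDl -/(delay s k) -/(delay s j).
have : 0 < lam * a k / mu k by rewrite !mulr_gt0 ?invr_gt0.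
have := j_min k; lra.
Qed.

End BestResponse.

Section Trajectory.
Variables (R : archiRealFieldType) (m n : nat) (mu : 'I_m -> R) (lam : 'I_n -> R).
Variables (player : nat -> 'I_n) (a s : nat -> 'I_m -> R).
Hypotheses (mu_gt0 : forall j, 0 < mu j) (lam_gt0 : forall i, 0 < lam i).
Hypothesis s0_ge0 : forall j, 0 <= s 0%N j.
Hypothesis br : forall t, best_response mu (lam (player t)) (s t) (a t).
Hypothesis step : forall t, s t.+1 = next_state mu (lam (player t)) (s t) (a t).

Lemma state_ge0 t j : 0 <= s t j.
Proof. by case: t => [|t]; rewrite ?step /next_state ?le_max ?lexx. Qed.

Lemma delay_trajectory_le t j k :
  delay mu (s t) j <= Num.max (delay mu (s t) k) (delay mu (s 0%N) j - t%:R).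
Proof.
elim: t => [|t IH]; first by rewrite subr0 le_max lexx orbT.
by rewrite step -natr1 opprD addrA; apply: delay_next_state_le.
Qed.

Lemma delay_trajectory_balanced t j k : delay mu (s 0%N) j <= t%:R ->
  delay mu (s t) j <= delay mu (s t) k.
Proof.
move=> drained; have := delay_trajectory_le t j k.
rewrite le_max => /orP[// | dj_le].
have := delay_ge0 mu_gt0 (state_ge0 t k); lra.
Qed.

End Trajectory.

Lemma delay_le_t_prime (R : archiRealFieldType) m (mu s0 : 'I_m -> R) (t : nat) j :
  t_prime mu s0 <= t%:Z -> delay mu s0 j <= t%:R.
Proof.
move=> t_ge; rewrite /delay -[t%:R]/(t%:Z%:~R) -ceil_le_int; apply: le_trans t_ge.
exact: (le_bigmax _ (fun i => Num.ceil (s0 i / mu i))).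
Qed.

Theorem lemma2 (R : archiRealFieldType) (m n : nat)
    (mu : 'I_m -> R) (lam : 'I_n -> R) (s0 : 'I_m -> R)
    (player : nat -> 'I_n) (a s : nat -> 'I_m -> R) :
  (forall j, 0 < mu j) ->
  (forall i, 0 < lam i) ->
  lambda_max lam < \sum_(j < m) mu j ->
  (forall j, 0 <= s0 j) ->
  s 0%N = s0 ->
  (forall t, best_response mu (lam (player t)) (s t) (a t)) ->
  (forall t, s t.+1 = next_state mu (lam (player t)) (s t) (a t)) ->
  forall t : nat, t_prime mu s0 <= t%:Z -> forall j, 0 < a t j.
Proof.
move=> mu_gt0 lam_gt0 _ s0_ge0 s_0 br step t t_ge j.
apply: (best_response_gt0_at_min_delay mu_gt0 (lam_gt0 _) (br t)) => k.
subst s0; apply: (delay_trajectory_balanced mu_gt0 lam_gt0 s0_ge0 br step).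
exact: delay_le_t_prime.
Qed.
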